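(* Let $q\ge 1$ be an integer and let $X$ be a random variable such that $qX$ is integer-valued almost surely. Then for all real $t$, \[ \varphi_{\lfloor X\rfloor}(t)=\sum_{j=0}^{q-1} h_q(t+2\pi j)\,\varphi_X(t+2\pi j) \qquad\text{and}\qquad \varphi_{\langle X\rangle}(t)=\sum_{j=0}^{q-1} \tilde h_q(t+2\pi j)\,\varphi_X(t+2\pi j). \]
   Context: For a random variable $Y$, $\varphi_Y(t):=\mathbb E\, e^{\mathrm i tY}$ is its characteristic function. $\lfloor x\rfloor$ is $x$ rounded down to an integer, and $\langle x\rangle:=\lfloor x+\tfrac12\rfloor$ is $x$ rounded to the nearest integer, with ties broken upward. Define \[ h_q(t):=\frac1q\sum_{k=0}^{q-1}e^{-\mathrm i tk/q}=\frac{1-e^{-\mathrm i t}}{q(1-e^{-\mathrm i t/q})}, \] where the fraction is interpreted as $1$ when $t\in 2\pi q\mathbb Z$. If $q$ is even, define $\tilde h_q(t):=\frac1q\sum_{k=-q/2}^{q/2-1}e^{-\mathrm i tk/q}=e^{\mathrm i t/2}h_q(t)$. If $q$ is odd, define $\tilde h_q(t):=\frac1q\sum_{k=-(q-1)/2}^{(q-1)/2}e^{-\mathrm i tk/q}=\frac{\sin(t/2)}{q\sin(t/(2q))}$, again interpreted as $1$ when $t\in 2\pi q\mathbb Z$. *)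

From HB Require Import structures.
From mathcomp Require Import all_boot all_order all_algebra.
From mathcomp Require Import all_classical all_reals all_analysis.
From mathcomp Require Import complex.
Set Implicit Arguments. Unset Strict Implicit. Unset Printing Implicit Defensive.
Import Order.TTheory GRing.Theory Num.Theory.
Local Open Scope ring_scope.
Local Open Scope complex_scope.

Definition expi (R : realType) (theta : R) : R[i] := cos theta +i* sin theta.

(* Characteristic function phi_Y(t) = E e^{i t Y}
   = E cos(tY) + i E sin(tY)  (both integrands bounded, hence integrable). *)
Definition charfun (d : measure_display) (T : measurableType d) (R : realType)
  (P : probability T R) (Y : T -> R) (t : R) : R[i] :=
  (Rintegral P setT (fun w => cos (t * Y w)))
  +i* (Rintegral P setT (fun w => sin (t * Y w))).

Definition floorR (R : realType) (x : R) : R := (Num.floor x)%:~R.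
Definition roundR (R : realType) (x : R) : R := (Num.floor (x + 2^-1))%:~R.

Definition h_q (R : realType) (q : nat) (t : R) : R[i] :=
  ((q%:R)^-1)%:C * \sum_(k < q) expi (- (t * k%:R / q%:R)).

(* tilde h_q(t) = (1/q) sum_{k=-q/2}^{q/2-1} e^{-i t k/q}  (q even)
                = (1/q) sum_{k=-(q-1)/2}^{(q-1)/2} e^{-i t k/q}  (q odd) *)
Definition ht_q (R : realType) (q : nat) (t : R) : R[i] :=
  if odd q then
    ((q%:R)^-1)%:C *
      \sum_(k < q) expi (- (t * ((k%:Z - ((q.-1)./2)%:Z)%:~R) / q%:R))
  else
    ((q%:R)^-1)%:C *
      \sum_(k < q) expi (- (t * ((k%:Z - (q./2)%:Z)%:~R) / q%:R)).

From mathcomp Require Import all_boot all_order all_algebra.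
From mathcomp Require Import all_classical all_reals all_analysis.
From mathcomp Require Import complex.
From mathcomp Require Import lra ring zify measurable_realfun.
Import Order.TTheory GRing.Theory Num.Theory.
Local Open Scope ring_scope.
Local Open Scope complex_scope.

(* If q X = n is an integer, write n + c = m q + k0 with 0 <= k0 < q. At the q
   frequencies s = t + 2 pi j the kernel (1/q) sum_k e^(-i s (k - c)/q) times
   e^(i s n/q) is e^(i t (m q + k0 - k)/q) e^(2 pi i j (k0 - k)/q); summing over j,
   orthogonality of the q-th roots of unity keeps only k = k0 and leaves e^(i t m).
   Here m = floor((n + c)/q) is floor X for c = 0 and the rounding of X for
   c = floor(q/2), so e^(i t floor X) and e^(i t <X>) are almost surely finite
   combinations of the bounded variables e^(i s X); taking expectations gives the
   theorem. *)

Lemma sum_expr_eq0 (F : idomainType) (z : F) (n : nat) :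
  z ^+ n = 1 -> z != 1 -> \sum_(i < n) z ^+ i = 0.
Proof.
move=> zn1 z1; have := subrX1 z n; rewrite zn1 subrr => /esym/eqP.
by rewrite mulf_eq0 subr_eq0 (negbTE z1) => /eqP.
Qed.

Section Expi.
Context {R : realType}.
Implicit Types (a b : R) (q : nat).

Lemma expiD a b : expi (a + b) = expi a * expi b.
Proof. by rewrite /expi cosD sinD; simpc; rewrite [sin a * cos b + _]addrC. Qed.

Lemma expi0 : expi (0 : R) = 1.
Proof. by rewrite /expi cos0 sin0. Qed.

Lemma expiMn a (n : nat) : expi (n%:R * a) = expi a ^+ n.
Proof.
elim: n => [|n IH]; first by rewrite mul0r expi0.
by rewrite -addn1 natrD mulrDl mul1r expiD IH exprD expr1.
Qed.

Lemma expi_2piz (z : int) : expi (2 * pi * z%:~R : R) = 1.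
Proof.
have expi_2pin (n : nat) : expi (2 * pi * n%:R : R) = 1.
  by rewrite mulrC expiMn /expi mulr_natl cos2pi sin2pi expr1n.
case: z => n; first exact: expi_2pin.
rewrite NegzE mulrN -[LHS]mulr1 -{1}(expi_2pin n.+1).
by rewrite -expiD addNr expi0.
Qed.

Lemma expi_2pi_neq1 (y : R) : -1 < y < 1 -> y != 0 -> expi (2 * pi * y) != 1.
Proof.
move=> /andP[yN1 y1] y0.
have sin_neq0 : sin (pi * y) != 0.
  have sin_gt0 z : 0 < z < 1 -> 0 < sin (pi * z).
    by move=> /andP[z0 z1]; rewrite sin_gt0_pi // mulr_gt0 ?pi_gt0 // gtr_pMr ?pi_gt0.
  have [yn|yp] : y < 0 \/ 0 < y by move: y0; rewrite neq_lt => /orP[]; [left|right].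
    by rewrite -oppr_eq0 -sinN -mulrN gt_eqF // sin_gt0 // oppr_gt0 yn ltrNl.
  by rewrite gt_eqF // sin_gt0 // yp.
apply: contra_neq sin_neq0 => /(congr1 (@complex.Re R)) /=.
rewrite -mulrA mulr_natl cos_mulr2n => cos2.
by apply/eqP; rewrite -sqrf_eq0 sin2cos2; apply/eqP; lra.
Qed.

Lemma sum_expi_roots q (a b : nat) : (a < q)%N -> (b < q)%N ->
  \sum_(j < q) expi (2 * pi * j%:R * (a%:R - b%:R) / q%:R) = ((a == b) * q)%:R :> R[i].
Proof.
move=> aq bq; have q0 : (0 < q%:R :> R) by rewrite ltr0n (leq_ltn_trans _ aq).
have [<-|ab] := eqVneq a b.
  under eq_bigr do rewrite subrr mulr0 mul0r expi0.
  by rewrite sumr_const card_ord mul1n.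
set z := expi (2 * pi * (a%:R - b%:R) / q%:R : R).
have zE (j : 'I_q) : expi (2 * pi * j%:R * (a%:R - b%:R) / q%:R) = z ^+ j.
  by rewrite /z -expiMn; congr expi; ring.
rewrite (eq_bigr _ (fun j _ => zE j)) sum_expr_eq0 //.
  rewrite /z -expiMn mulrC -!mulrA mulVf ?gt_eqF // mulr1 mulrC.
  by rewrite -(intrB R a b) [pi * _ * 2]mulrC mulrA expi_2piz.
rewrite /z -mulrA expi_2pi_neq1 //.
  rewrite ltr_pdivrMr // ltr_pdivlMr // mulN1r mul1r.
  have aqR : (a%:R < q%:R :> R) by rewrite ltr_nat.
  have bqR : (b%:R < q%:R :> R) by rewrite ltr_nat.
  have := ler0n R a; have := ler0n R b.
  by move=> *; apply/andP; split; lra.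
by rewrite mulf_eq0 invr_eq0 (gt_eqF q0) orbF subr_eq0 eqr_nat.
Qed.

End Expi.

Section ShiftKernel.
Variable R : realType.
Implicit Types (t x : R) (q : nat).

Lemma floor_divn_decomp (a : int) q : (0 < q)%N ->
  exists2 r : nat, (r < q)%N & a = Num.floor (a%:~R / q%:R : R) * q%:Z + r%:Z.
Proof.
move=> q0; have qR : (0 < q%:R :> R) by rewrite ltr0n.
have /andP[lo hi] := floor_itv (a%:~R / q%:R : R).
rewrite ler_pdivlMr // in lo; rewrite ltr_pdivrMr // in hi.
have {lo} : Num.floor (a%:~R / q%:R : R) * q%:Z <= a by rewrite -(ler_int R) intrM.
have {hi} : a < Num.floor (a%:~R / q%:R : R) * q%:Z + q%:Z.
  by rewrite -(ltr_int R) intrD intrM; rewrite intrD mulrDl mul1r in hi.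
set m := Num.floor _ => hi lo; exists `|(a - m * q%:Z)%R|%N; lia.
Qed.

Definition shift_kernel q (c : int) t : R[i] :=
  (q%:R^-1)%:C * \sum_(k < q) expi (- (t * (k%:Z - c)%:~R / q%:R)).

Lemma sum_shift_kernel_expi q (c n : int) t : (0 < q)%N ->
  \sum_(j < q) shift_kernel q c (t + 2 * pi * j%:R) *
                expi ((t + 2 * pi * j%:R) * (n%:~R / q%:R))
  = expi (t * (Num.floor ((n + c)%:~R / q%:R : R))%:~R).
Proof.
move=> q0; have qR : (q%:R : R) != 0 by rewrite pnatr_eq0 -lt0n.
have [k0 k0q] := floor_divn_decomp (n + c) q q0; set m := Num.floor _ => ncE.
have nE : (n%:~R : R) = m%:~R * q%:R + k0%:R - c%:~R.
  by apply/(addIr c%:~R); rewrite subrK -intrD ncE intrD intrM.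
have termE (j k : 'I_q) :
  expi (- ((t + 2 * pi * j%:R) * (k%:Z - c)%:~R / q%:R)) *
    expi ((t + 2 * pi * j%:R) * (n%:~R / q%:R)) =
  expi (t * (m%:~R * q%:R + k0%:R - k%:R) / q%:R) *
    expi (2 * pi * j%:R * (k0%:R - k%:R) / q%:R).
  rewrite -[RHS]mulr1 -(expi_2piz (j%:Z * m)) -!expiD; congr expi.
  by rewrite intrM intrB nE /=; field.
under eq_bigr do rewrite /shift_kernel -mulrA big_distrl /= big_distrr /=.
rewrite exchange_big /=.
under eq_bigr => k _.
  under eq_bigr do rewrite termE mulrA.
  rewrite -big_distrr /= sum_expi_roots //.
  over.
rewrite (bigD1 (Ordinal k0q)) //= eqxx big1 ?addr0; last first.
  move=> k /negbTE kk0; rewrite eq_sym.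
  by rewrite -[k0]/(nat_of_ord (Ordinal k0q)) (inj_eq val_inj) kk0 mul0n mulr0.
rewrite mul1n addrK mulrAC -(rmorph_nat (@real_complex R)).
rewrite -(rmorphM (@real_complex R)) mulVf // mul1r.
by congr expi; field.
Qed.

Lemma h_qE q t : h_q q t = shift_kernel q 0 t.
Proof. by rewrite /shift_kernel; under [X in _ = _ * X]eq_bigr do rewrite subr0. Qed.

Lemma ht_qE q t : ht_q q t = shift_kernel q (q./2)%:Z t.
Proof. by rewrite /ht_q; case: ifP => // oq; have -> : (q.-1)./2 = q./2 by lia. Qed.

Lemma floor_half_shift (n : int) q : (0 < q)%N ->
  Num.floor ((n + (q./2)%:Z)%:~R / q%:R : R) = Num.floor (n%:~R / q%:R + 2^-1 : R).
Proof.
move=> q0; have [r rq] := floor_divn_decomp (n + (q./2)%:Z) q q0.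
set m := Num.floor _ => ncE; apply/esym/floor_def.
have qR : (0 < q%:R :> R) by rewrite ltr0n.
have nE : (n%:~R : R) = m%:~R * q%:R + r%:R - (q./2)%:R.
  apply/(addIr (q./2)%:R); rewrite subrK -[(q./2)%:R]/((q./2)%:Z)%:~R.
  by rewrite -intrD ncE intrD intrM.
have rqR : (r%:R + 1 <= q%:R :> R) by rewrite natr1 ler_nat.
have [hq1 hq2] : ((q./2)%:R * 2 <= q%:R :> R) /\ (q%:R <= (q./2)%:R * 2 + 1 :> R).
  by rewrite -!natrM natr1 !ler_nat; split; lia.
have r0 := ler0n R r.
have qx : q%:R * (n%:~R / q%:R) = n%:~R :> R by rewrite mulrC divfK ?gt_eqF.
move: (n%:~R / q%:R) qx => x qx.
by rewrite intrD; apply/andP; split; nra.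
Qed.

Lemma expi_floorR_sum q (n : int) x t : (0 < q)%N -> q%:R * x = n%:~R ->
  expi (t * floorR x) =
    \sum_(j < q) h_q q (t + 2 * pi * j%:R) * expi ((t + 2 * pi * j%:R) * x).
Proof.
move=> q0 qx; have -> : x = n%:~R / q%:R.
  by rewrite -qx mulrAC divff ?mul1r // pnatr_eq0 -lt0n.
by under eq_bigr do rewrite h_qE; rewrite sum_shift_kernel_expi // addr0.
Qed.

Lemma expi_roundR_sum q (n : int) x t : (0 < q)%N -> q%:R * x = n%:~R ->
  expi (t * roundR x) =
    \sum_(j < q) ht_q q (t + 2 * pi * j%:R) * expi ((t + 2 * pi * j%:R) * x).
Proof.
move=> q0 qx; have -> : x = n%:~R / q%:R.
  by rewrite -qx mulrAC divff ?mul1r // pnatr_eq0 -lt0n.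
by under eq_bigr do rewrite ht_qE; rewrite sum_shift_kernel_expi // floor_half_shift.
Qed.

End ShiftKernel.

Lemma Re_sum (R : rcfType) (I : Type) (r : seq I) (F : I -> R[i]) :
  complex.Re (\sum_(i <- r) F i) = \sum_(i <- r) complex.Re (F i).
Proof. by apply: (big_morph _ (fun x y => _) (erefl _)); case=> ? ?; case. Qed.

Lemma Im_sum (R : rcfType) (I : Type) (r : seq I) (F : I -> R[i]) :
  complex.Im (\sum_(i <- r) F i) = \sum_(i <- r) complex.Im (F i).
Proof. by apply: (big_morph _ (fun x y => _) (erefl _)); case=> ? ?; case. Qed.

Lemma ReM (R : rcfType) (z w : R[i]) :
  complex.Re (z * w) = complex.Re z * complex.Re w - complex.Im z * complex.Im w.
Proof. by case: z w => [a b] [x y]; simpc. Qed.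

Lemma ImM (R : rcfType) (z w : R[i]) :
  complex.Im (z * w) = complex.Re z * complex.Im w + complex.Im z * complex.Re w.
Proof. by case: z w => [a b] [x y]; simpc. Qed.

Section ComplexMean.
Context {d : measure_display} {T : measurableType d} {R : realType}
  (mu : {measure set T -> \bar R}).
Implicit Types (f g : T -> R[i]) (c : R[i]).

Definition cintegrable f :=
  mu.-integrable setT (EFin \o (fun w => complex.Re (f w))) /\
  mu.-integrable setT (EFin \o (fun w => complex.Im (f w))).

(* Only meaningful for [cintegrable f]: a non-integrable part has [Rintegral] 0. *)
Definition cmean f : R[i] :=
  \int[mu]_w complex.Re (f w) +i* \int[mu]_w complex.Im (f w).

Lemma integrable_sumR (I : Type) (r : seq I) (f : I -> T -> R) :
  (forall i, mu.-integrable setT (EFin \o f i)) ->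
  mu.-integrable setT (EFin \o (fun w => \sum_(i <- r) f i w)).
Proof.
move=> fi; have := integrable_sum measurableT r (fun i (_ : xpredT i) => fi i).
by apply: eq_integrable => // w _; rewrite /= sumEFin.
Qed.

Lemma Rintegral_sum (I : Type) (r : seq I) (f : I -> T -> R) :
  (forall i, mu.-integrable setT (EFin \o f i)) ->
  \int[mu]_w (\sum_(i <- r) f i w) = \sum_(i <- r) \int[mu]_w f i w.
Proof.
move=> fi; elim: r => [|i r IH].
  by under eq_Rintegral do rewrite big_nil; rewrite big_nil Rintegral_cst // mul0r.
under eq_Rintegral do rewrite big_cons.
by rewrite RintegralD ?IH ?big_cons //; exact: integrable_sumR.
Qed.

Lemma integrableZlR (k : R) [f : T -> R] : mu.-integrable setT (EFin \o f) ->
  mu.-integrable setT (EFin \o (fun w => k * f w)).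
Proof.
by move/(integrableZl measurableT k); apply: eq_integrable => // w _; rewrite /= EFinM.
Qed.

Lemma cintegrableZl c f : cintegrable f -> cintegrable (fun w => c * f w).
Proof.
move=> [iRe iIm]; split.
  have := integrableB measurableT
    (integrableZlR (complex.Re c) iRe) (integrableZlR (complex.Im c) iIm).
  by apply: eq_integrable => // w _ /=; rewrite ReM EFinB.
have := integrableD measurableT
  (integrableZlR (complex.Re c) iIm) (integrableZlR (complex.Im c) iRe).
by apply: eq_integrable => // w _ /=; rewrite ImM EFinD.
Qed.

Lemma cintegrable_sum (I : Type) (r : seq I) (F : I -> T -> R[i]) :
  (forall i, cintegrable (F i)) -> cintegrable (fun w => \sum_(i <- r) F i w).
Proof.
move=> Fi; split.
  by under eq_fun do rewrite Re_sum; apply: integrable_sumR => i; case: (Fi i).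
by under eq_fun do rewrite Im_sum; apply: integrable_sumR => i; case: (Fi i).
Qed.

Lemma cmeanZl c f : cintegrable f -> cmean (fun w => c * f w) = c * cmean f.
Proof.
move=> [iRe iIm]; rewrite /cmean.
under eq_Rintegral do rewrite ReM; under [X in _ +i* X]eq_Rintegral do rewrite ImM.
rewrite RintegralB ?RintegralD ?RintegralZl //; try exact: integrableZlR.
by case: c.
Qed.

Lemma cmean_sum (I : Type) (r : seq I) (F : I -> T -> R[i]) :
  (forall i, cintegrable (F i)) ->
  cmean (fun w => \sum_(i <- r) F i w) = \sum_(i <- r) cmean (F i).
Proof.
move=> Fi; rewrite /cmean.
under eq_Rintegral do rewrite Re_sum; under [X in _ +i* X]eq_Rintegral do rewrite Im_sum.
rewrite !Rintegral_sum; try by move=> i; case: (Fi i).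
by apply/eqP; rewrite eq_complex /= Re_sum Im_sum !eqxx.
Qed.

Lemma cmean_ae_eq f g : cintegrable f -> cintegrable g ->
  {ae mu, forall w, f w = g w} -> cmean f = cmean g.
Proof.
move=> [/integrableP[mRf _] /integrableP[mIf _]].
move=> [/integrableP[mRg _] /integrableP[mIg _]] fg.
rewrite /cmean /Rintegral; congr (fine _ +i* fine _); apply: ae_eq_integral => //;
  by apply: filterS fg => w /= ->.
Qed.

End ComplexMean.

Section FiniteMeasure.
Context {d : measure_display} {T : measurableType d} {R : realType}
  (mu : {finite_measure set T -> \bar R}).

Lemma bounded_integrable (f : T -> R) (M : R) : measurable_fun setT f ->
  (forall w, `|f w| <= M) -> mu.-integrable setT (EFin \o f).
Proof.
move=> mf fM; apply: measurable_bounded_integrable => //.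
  by rewrite ltey_eq fin_num_measure.
exists M; split; first exact: num_real.
by move=> x Mx y _ /=; rewrite (le_trans (fM y)) // ltW.
Qed.

Lemma cintegrable_expi (X : T -> R) (s : R) : measurable_fun setT X ->
  cintegrable mu (fun w => expi (s * X w)).
Proof.
move=> mX; have msX : measurable_fun setT (fun w => s * X w) by exact: measurable_funM.
split; apply: (@bounded_integrable _ 1) => /=.
- exact: measurableT_comp (continuous_measurable_fun (@continuous_cos R)) msX.
- by move=> w; exact: cos_max.
- exact: measurableT_comp (continuous_measurable_fun (@continuous_sin R)) msX.
- by move=> w; exact: sin_max.
Qed.

End FiniteMeasure.

Section CharacteristicFunction.
Context {d : measure_display} {T : measurableType d} {R : realType}
  (P : probability T R).

Lemma charfunE (Y : T -> R) t : charfun P Y t = cmean P (fun w => expi (t * Y w)).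
Proof. by []. Qed.

Lemma charfun_ae_sum (I : Type) (r : seq I) (H : I -> R[i]) (s : I -> R)
    (X Y : T -> R) t :
  measurable_fun setT X -> measurable_fun setT Y ->
  {ae P, forall w, expi (t * Y w) = \sum_(j <- r) H j * expi (s j * X w)} ->
  charfun P Y t = \sum_(j <- r) H j * charfun P X (s j).
Proof.
move=> mX mY YX; have iX j : cintegrable P (fun w => H j * expi (s j * X w)).
  exact/cintegrableZl/cintegrable_expi.
have iY := cintegrable_expi P Y t mY.
have iS : cintegrable P (fun w => \sum_(j <- r) H j * expi (s j * X w)).
  exact: cintegrable_sum.
rewrite charfunE (cmean_ae_eq _ _ _ iY iS YX) cmean_sum //; apply: eq_bigr => j _.
by rewrite cmeanZl //; exact: cintegrable_expi.
Qed.

End CharacteristicFunction.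

Lemma measurable_floorR (R : realType) : measurable_fun setT (@floorR R).
Proof. by apply: nondecreasing_measurable => // x y xy; rewrite /floorR ler_int le_floor. Qed.

Lemma measurable_roundR (R : realType) : measurable_fun setT (@roundR R).
Proof.
apply: nondecreasing_measurable => // x y xy.
by rewrite /roundR ler_int le_floor // lerD2r.
Qed.

Theorem theorem1 (d : measure_display) (T : measurableType d) (R : realType)
  (P : probability T R) (q : nat) (X : {RV P >-> R}) :
  (1 <= q)%N ->
  {ae P, forall w, (q%:R * X w) \is a Num.int} ->
  forall t : R,
    charfun P (fun w => floorR (X w)) t =
      \sum_(j < q) h_q q (t + 2 * pi * j%:R) * charfun P X (t + 2 * pi * j%:R)
  /\
    charfun P (fun w => roundR (X w)) t =
      \sum_(j < q) ht_q q (t + 2 * pi * j%:R) * charfun P X (t + 2 * pi * j%:R).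
Proof.
move=> q1 qX t; have mX : measurable_fun setT X by exact: measurable_funPT.
split; apply: charfun_ae_sum => //.
- exact: measurableT_comp (measurable_floorR R) mX.
- by apply: filterS qX => w /intrP[n qXn]; exact: expi_floorR_sum qXn.
- exact: measurableT_comp (measurable_roundR R) mX.
- by apply: filterS qX => w /intrP[n qXn]; exact: expi_roundR_sum qXn.
Qed.
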